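(* Let $U$ be a finite nonempty set, $(T,I,N)$ an IMTL triplet, $\widetilde{R}$ a $T$-preorder relation on $U$, $A$ a fuzzy set on $U$, and $L:\mathbb{R}\times\mathbb{R}\to\mathbb{R}^+$ a loss function of $\lor$-type. Let $\hat{A}:U\to[0,1]$ be an optimal solution of $$\text{minimize }\sum_{u\in U}L(A(u),\hat{A}(u))\quad\text{subject to } T(\widetilde{R}(u,v),\hat{A}(v))\le\hat{A}(u)\ (u,v\in U),\quad 0\le\hat{A}(u)\le1\ (u\in U),$$ and let $U^-=\{u;\hat{A}(u)<A(u)\}$, $U^0=\{u;\hat{A}(u)=A(u)\}$, $U^+=\{u;\hat{A}(u)>A(u)\}$. Then: for every $u\in U^+$ there is $v\in U^-\cup U^0$ such that $\widetilde{R}^+_{\hat{A}(v)}(v)$ is adjacent to $\widetilde{R}^-_{N(\hat{A}(u))}(u)$; and for every $u\in U^-$ there is $v\in U^+\cup U^0$ such that $\widetilde{R}^-_{N(\hat{A}(v))}(v)$ is adjacent to $\widetilde{R}^+_{\hat{A}(u)}(u)$.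
   Context: A residual triplet $(T,I,N)$ consists of a left-continuous $t$-norm $T$, its residual implicator $I(x,y)=\sup\{\beta\in[0,1]: T(x,\beta)\le y\}$ and $N(x)=I(x,0)$; it is IMTL if $N$ is involutive. $\widetilde{R}:U\times U\to[0,1]$ is a $T$-preorder if reflexive and $T$-transitive. Granules: $\widetilde{R}^+_\lambda(u)$ is the fuzzy set $w\mapsto T(\widetilde{R}(w,u),\lambda)$ and $\widetilde{R}^-_\lambda(v)$ is $w\mapsto T(\widetilde{R}(v,w),\lambda)$. Adjacency: for $x,y\in U$, $\widetilde{R}^-_{\lambda_2}(y)$ is adjacent to $\widetilde{R}^+_{\lambda_1}(x)$ if $\lambda_1=I(\lambda_2,N(\widetilde{R}(y,x)))$; $\widetilde{R}^+_{\lambda_1}(x)$ is adjacent to $\widetilde{R}^-_{\lambda_2}(y)$ if $\lambda_2=I(\lambda_1,N(\widetilde{R}(y,x)))$. A loss function $L$ is of $\lor$-type if for every real $a$: $L(a,a)=0$; $x\mapsto L(x,a)$ and $x\mapsto L(a,x)$ are increasing for $x>a$ and decreasing for $x<a$. *)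

From HB Require Import structures.
From mathcomp Require Import all_boot all_order all_algebra.
From mathcomp Require Import all_classical all_reals all_analysis.
Set Implicit Arguments. Unset Strict Implicit. Unset Printing Implicit Defensive.
Import Order.TTheory GRing.Theory Num.Theory.
Import numFieldNormedType.Exports.
Local Open Scope classical_set_scope.
Local Open Scope ring_scope.

Section FuzzyDefs.
Variable R : realType.

Definition unit_iv (x : R) : Prop := 0 <= x <= 1.

(** t-norm on [0,1] (values outside [0,1] are irrelevant). *)
Definition is_tnorm (T : R -> R -> R) : Prop :=
  [/\ (forall x y, unit_iv x -> unit_iv y -> unit_iv (T x y)),
      (forall x y, unit_iv x -> unit_iv y -> T x y = T y x),
      (forall x y z, unit_iv x -> unit_iv y -> unit_iv z ->
          T x (T y z) = T (T x y) z),
      (forall x x' y, unit_iv x -> unit_iv x' -> unit_iv y -> x <= x' ->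
          T x y <= T x' y)
    & (forall x, unit_iv x -> T x 1 = x)].

(** left-continuity (in the first argument; by commutativity in both). *)
Definition left_continuous_tnorm (T : R -> R -> R) : Prop :=
  is_tnorm T /\
  forall x y, 0 < x <= 1 -> unit_iv y ->
    (fun z => T z y) @ x^'- --> T x y.

Definition resI (T : R -> R -> R) (x y : R) : R :=
  sup [set b : R | unit_iv b /\ T x b <= y].

Definition resN (T : R -> R -> R) (x : R) : R := resI T x 0.

Definition IMTL_triplet (T : R -> R -> R) : Prop :=
  left_continuous_tnorm T /\ forall x, unit_iv x -> resN T (resN T x) = x.

Variable U : finType.

Definition fuzzy_rel (Rt : U -> U -> R) : Prop := forall u v, unit_iv (Rt u v).

Definition T_preorder (T : R -> R -> R) (Rt : U -> U -> R) : Prop :=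
  [/\ fuzzy_rel Rt, (forall u, Rt u u = 1)
    & forall u v w, T (Rt u v) (Rt v w) <= Rt u w].

Definition fuzzy_set (A : U -> R) : Prop := forall u, unit_iv (A u).

Definition granule_plus (T : R -> R -> R) (Rt : U -> U -> R) (l : R) (u : U) : U -> R :=
  fun w => T (Rt w u) l.
Definition granule_minus (T : R -> R -> R) (Rt : U -> U -> R) (l : R) (v : U) : U -> R :=
  fun w => T (Rt v w) l.

(** R^-_{l2}(y) is adjacent to R^+_{l1}(x) *)
Definition adj_minus_to_plus (T : R -> R -> R) (Rt : U -> U -> R)
  (y : U) (l2 : R) (x : U) (l1 : R) : Prop :=
  l1 = resI T l2 (resN T (Rt y x)).

(** R^+_{l1}(x) is adjacent to R^-_{l2}(y) *)
Definition adj_plus_to_minus (T : R -> R -> R) (Rt : U -> U -> R)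
  (x : U) (l1 : R) (y : U) (l2 : R) : Prop :=
  l2 = resI T l1 (resN T (Rt y x)).

End FuzzyDefs.

(** loss function L : R x R -> R^+ of \/-type
    ("increasing"/"decreasing" read as strict) *)
Definition vee_loss (R : realType) (L : R -> R -> R) : Prop :=
  [/\ (forall x y, 0 <= L x y),
      (forall a, L a a = 0),
      (forall a x y, a < x -> x < y -> L x a < L y a /\ L a x < L a y)
    & (forall a x y, y < x -> x < a -> L x a < L y a /\ L a x < L a y)].

Definition feasible (R : realType) (U : finType) (T : R -> R -> R)
  (Rt : U -> U -> R) (B : U -> R) : Prop :=
  (forall u v, T (Rt u v) (B v) <= B u) /\ (forall u, 0 <= B u <= 1).

Definition optimal_solution (R : realType) (U : finType) (T : R -> R -> R)
  (Rt : U -> U -> R) (A : U -> R) (L : R -> R -> R) (Ahat : U -> R) : Prop :=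
  feasible T Rt Ahat /\
  forall B : U -> R, feasible T Rt B ->
    \sum_(u : U) L (A u) (Ahat u) <= \sum_(u : U) L (A u) (B u).

(* An optimal [Ahat] is a fixed point of two closure operators: the least
   feasible function above [min(A, Ahat)], [u |-> max_y T(R(u,y), min(A y, Ahat y))],
   and the greatest feasible function below [max(A, Ahat)],
   [u |-> min_y I(R(y,u), max(A y, Ahat y))].  Both lie between [A] and [Ahat]
   pointwise, so if either differed from [Ahat] it would strictly lower the
   total loss.  Hence [Ahat u] is generated by some [v] as [T(R(u,v), Ahat v)],
   resp. as [I(R(v,u), Ahat v)]; taking [v] with [A v] maximal (resp. minimal)
   among the generators forces [Ahat v <= A v] (resp. [A v <= Ahat v]).  Since
   [I(a, N b) = N(T(a, b))] and [N] is involutive, these identities are exactly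
   the two adjacency relations. *)

From HB Require Import structures.
From mathcomp Require Import all_boot all_order all_algebra.
From mathcomp Require Import all_classical all_reals all_analysis.
Import Order.TTheory GRing.Theory Num.Theory.
Local Open Scope classical_set_scope.
Local Open Scope ring_scope.
Set Implicit Arguments. Unset Strict Implicit.

Lemma unit_iv0 {R : realType} : unit_iv (0 : R).
Proof. by rewrite /unit_iv lexx ler01. Qed.

Lemma unit_iv1 {R : realType} : unit_iv (1 : R).
Proof. by rewrite /unit_iv lexx ler01. Qed.

Section TNorm.
Variables (R : realType) (T : R -> R -> R).
Hypothesis HT : is_tnorm T.

Lemma tnorm_unit x y : unit_iv x -> unit_iv y -> unit_iv (T x y).
Proof. by case: HT => h _ _ _ _; apply: h. Qed.

Lemma tnormC x y : unit_iv x -> unit_iv y -> T x y = T y x.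
Proof. by case: HT => _ h _ _ _; apply: h. Qed.

Lemma tnormA x y z : unit_iv x -> unit_iv y -> unit_iv z ->
  T x (T y z) = T (T x y) z.
Proof. by case: HT => _ _ h _ _; apply: h. Qed.

Lemma ler_tnorml x x' y : unit_iv x -> unit_iv x' -> unit_iv y -> x <= x' ->
  T x y <= T x' y.
Proof. by case: HT => _ _ _ h _; apply: h. Qed.

Lemma tnormx1 x : unit_iv x -> T x 1 = x.
Proof. by case: HT => _ _ _ _ h; apply: h. Qed.

Lemma tnorm1x x : unit_iv x -> T 1 x = x.
Proof. by move=> hx; rewrite tnormC ?tnormx1 //; exact: unit_iv1. Qed.

Lemma ler_tnormr x y y' : unit_iv x -> unit_iv y -> unit_iv y' -> y <= y' ->
  T x y <= T x y'.
Proof. by move=> hx hy hy' yy'; rewrite !(tnormC hx) //; apply: ler_tnorml. Qed.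

Lemma tnorm_ler x y : unit_iv x -> unit_iv y -> T x y <= y.
Proof.
move=> hx hy; rewrite -[leRHS](tnorm1x hy).
by apply: ler_tnorml => //; [exact: unit_iv1 | case/andP: hx].
Qed.

Lemma tnorm_ge0 x y : unit_iv x -> unit_iv y -> 0 <= T x y.
Proof. by move=> hx hy; case/andP: (tnorm_unit hx hy). Qed.

Lemma tnormx0 x : unit_iv x -> T x 0 = 0.
Proof.
by move=> hx; apply/le_anti; rewrite tnorm_ler ?tnorm_ge0 //; exact: unit_iv0.
Qed.

End TNorm.

Section Residuum.
Variables (R : realType) (T : R -> R -> R).
Hypothesis HT : left_continuous_tnorm T.
Let HTn : is_tnorm T := HT.1.

Let resI_set a c := [set b : R | unit_iv b /\ T a b <= c].

Let resI_set0 a c : unit_iv a -> 0 <= c -> resI_set a c 0.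
Proof. by move=> ha c0; split; [exact: unit_iv0 | rewrite tnormx0]. Qed.

Let has_sup_resI_set a c : unit_iv a -> 0 <= c -> has_sup (resI_set a c).
Proof.
by move=> ha c0; split; [exists 0; exact: resI_set0 | exists 1 => b [/andP[]]].
Qed.

Lemma resI_unit a c : unit_iv a -> 0 <= c -> unit_iv (resI T a c).
Proof.
move=> ha c0; apply/andP; split.
  exact: sup_upper_bound (has_sup_resI_set ha c0) _ (resI_set0 ha c0).
by apply: ge_sup; [exists 0; exact: resI_set0 | move=> b [/andP[]]].
Qed.

Lemma resI_ub a b c : unit_iv a -> unit_iv b -> 0 <= c -> T a b <= c ->
  b <= resI T a c.
Proof. by move=> ha hb c0 hT; exact: sup_upper_bound (has_sup_resI_set ha c0) _ _. Qed.

Lemma tnorm_lt_resI_le a c z : unit_iv a -> 0 <= c -> 0 <= z < resI T a c ->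
  T z a <= c.
Proof.
move=> ha c0 /andP[z0 zs].
have [b [hb Tb] zb] := sup_gt (ex_intro _ 0 (resI_set0 ha c0)) zs.
have hz : unit_iv z by rewrite /unit_iv z0 (le_trans (ltW zb)) //; case/andP: hb.
by apply: le_trans Tb; rewrite (tnormC HTn ha hb); apply: ler_tnorml => //; exact: ltW.
Qed.

(* The supremum is attained: this is where left-continuity is needed. *)
Lemma tnorm_resI_le a c : unit_iv a -> 0 <= c -> T a (resI T a c) <= c.
Proof.
move=> ha c0; have hs := resI_unit ha c0; set s := resI T a c in hs *.
have [->|s_neq0] := eqVneq s 0; first by rewrite tnormx0.
have s_gt0 : 0 < s by rewrite lt0r s_neq0; case/andP: hs.
have s_le1 : 0 < s <= 1 by rewrite s_gt0; case/andP: hs.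
rewrite (tnormC HTn ha hs); apply: cvgr_to_le (HT.2 s a s_le1 ha) _.
near=> z; apply: tnorm_lt_resI_le => //; apply/andP; split.
  by apply: ltW; near: z; exact: nbhs_left_gt.
by near: z; exact: nbhs_left_lt.
Unshelve. all: by end_near.
Qed.

Lemma resI1x c : unit_iv c -> resI T 1 c = c.
Proof.
move=> hc; have c0 : 0 <= c by case/andP: hc.
apply/le_anti/andP; split.
  rewrite -[leLHS](tnorm1x HTn (resI_unit unit_iv1 c0)).
  by rewrite tnorm_resI_le //; exact: unit_iv1.
by apply: resI_ub => //; [exact: unit_iv1 | rewrite tnorm1x].
Qed.

Lemma resI_ge a c : unit_iv a -> unit_iv c -> c <= resI T a c.
Proof. by move=> ha hc; apply: resI_ub => //; [case/andP: hc | exact: tnorm_ler]. Qed.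

Lemma resI_resN a b : unit_iv a -> unit_iv b -> resI T a (resN T b) = resN T (T a b).
Proof.
move=> ha hb; have hab := tnorm_unit HTn ha hb.
have hNb := resI_unit hb (lexx 0); have Nb0 : 0 <= resN T b by case/andP: hNb.
apply/le_anti/andP; split.
  rewrite [leRHS]/resN; apply: resI_ub hab (resI_unit ha Nb0) (lexx 0) _.
  rewrite (tnormC HTn ha hb) -tnormA //; last exact: resI_unit.
  apply: le_trans (tnorm_resI_le hb (lexx 0)).
  by apply: ler_tnormr => //; [exact/tnorm_unit/resI_unit | exact: tnorm_resI_le].
have hNab := resI_unit hab (lexx 0).
apply: resI_ub => //; apply: resI_ub => //; first exact: tnorm_unit.
by rewrite tnormA // -(tnormC HTn ha hb); exact: tnorm_resI_le.
Qed.

End Residuum.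

Section VeeLoss.
Variables (R : realType) (L : R -> R -> R).
Hypothesis HL : vee_loss L.

Lemma vee_loss_gt0 a c : a != c -> 0 < L a c.
Proof.
case: HL => L_ge0 Laa Lup Ldown; rewrite neq_lt => /orP[ac|ca].
  have /andP[amid midc] : a < (a + c) / 2 < c by rewrite !midf_lt.
  by apply: le_lt_trans (L_ge0 a ((a + c) / 2)) _; case: (Lup a _ _ amid midc).
have /andP[cmid mida] : c < (c + a) / 2 < a by rewrite !midf_lt.
by apply: le_lt_trans (L_ge0 a ((c + a) / 2)) _; case: (Ldown a _ _ cmid mida).
Qed.

Lemma vee_loss_lt_between a b c : Num.min a c <= b <= Num.max a c -> b != c ->
  L a b < L a c.
Proof.
case: HL => _ Laa Lup Ldown; move=> /andP[hmin hmax] bc.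
have [-> | ab] := eqVneq a b; first by rewrite Laa vee_loss_gt0.
have [ac | ca] := leP a c.
- move: hmin hmax; rewrite min_l // max_r // => hab hbc.
  have [a_lt_b b_lt_c] : a < b /\ b < c by rewrite !lt_neqAle ab bc hab hbc.
  by case: (Lup a b c a_lt_b b_lt_c).
- move: hmin hmax; rewrite min_r ?max_l ?(ltW ca) // => hcb hba.
  have [c_lt_b b_lt_a] : c < b /\ b < a.
    by split; rewrite lt_neqAle ?hcb ?hba andbT eq_sym.
  by case: (Ldown a b c c_lt_b b_lt_a).
Qed.

End VeeLoss.

Section Closures.
Variables (R : realType) (U : finType) (T : R -> R -> R) (Rt : U -> U -> R).
Hypotheses (HT : left_continuous_tnorm T) (HR : T_preorder T Rt).
Let HTn : is_tnorm T := HT.1.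

Let Rt_unit u v : unit_iv (Rt u v). Proof. by case: HR => h _ _; apply: h. Qed.
Let Rt_refl u : Rt u u = 1. Proof. by case: HR. Qed.

Lemma tnorm_Rt_trans u v w b : unit_iv b ->
  T (Rt u v) (T (Rt v w) b) <= T (Rt u w) b.
Proof.
move=> hb; rewrite tnormA //; apply: ler_tnorml => //; first exact: tnorm_unit.
by case: HR => _ _; apply.
Qed.

Definition upper_closure (m : U -> R) (z : U) : R :=
  \big[Num.max/0]_y T (Rt z y) (m y).

Definition lower_closure (m : U -> R) (z : U) : R :=
  \big[Num.min/1]_y resI T (Rt y z) (m y).

Variables (m : U -> R) (B : U -> R).
Hypotheses (Hm : fuzzy_set m) (HB : feasible T Rt B).

Let B_unit z : unit_iv (B z). Proof. by case: HB => _; apply. Qed.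
Let B_ext u v : T (Rt u v) (B v) <= B u. Proof. by case: HB => + _; apply. Qed.
Let m_ge0 y : 0 <= m y. Proof. by case/andP: (Hm y). Qed.

Lemma tnorm_le_upper_closure z y : T (Rt z y) (m y) <= upper_closure m z.
Proof. exact: le_bigmax. Qed.

Lemma upper_closure_attained z : exists y, upper_closure m z = T (Rt z y) (m y).
Proof.
have F_ge0 y : true -> 0 <= T (Rt z y) (m y) by move=> _; apply: tnorm_ge0.
rewrite /upper_closure.
by have [y _ ->] := @eq_bigmax _ _ _ 0 z xpredT _ isT F_ge0; exists y.
Qed.

Lemma upper_closure_feasible : feasible T Rt (upper_closure m).
Proof.
have C_unit z : unit_iv (upper_closure m z).
  by have [y ->] := upper_closure_attained z; apply: tnorm_unit.
split=> [u v|]; last exact: C_unit.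
have [y ->] := upper_closure_attained v.
exact: le_trans (tnorm_Rt_trans _ _ _ _) (tnorm_le_upper_closure _ _).
Qed.

Lemma le_upper_closure z : m z <= upper_closure m z.
Proof. by rewrite -[leLHS](tnorm1x HTn) // -(Rt_refl z) tnorm_le_upper_closure. Qed.

Lemma upper_closure_le z : (forall y, m y <= B y) -> upper_closure m z <= B z.
Proof.
move=> mB; apply: bigmax_le => [|y _]; first by case/andP: (B_unit z).
exact: le_trans (ler_tnormr HTn (Rt_unit z y) (Hm y) (B_unit y) (mB y)) (B_ext z y).
Qed.

Lemma lower_closure_le_resI z y : lower_closure m z <= resI T (Rt y z) (m y).
Proof. exact: bigmin_le. Qed.

Lemma lower_closure_attained z : exists y, lower_closure m z = resI T (Rt y z) (m y).
Proof.
have F_le1 y : true -> resI T (Rt y z) (m y) <= 1.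
  by move=> _; case/andP: (resI_unit HT (Rt_unit y z) (m_ge0 y)).
rewrite /lower_closure.
by have [y _ ->] := @eq_bigmin _ _ _ 1 z xpredT _ isT F_le1; exists y.
Qed.

Lemma lower_closure_feasible : feasible T Rt (lower_closure m).
Proof.
have C_unit z : unit_iv (lower_closure m z).
  by have [y ->] := lower_closure_attained z; apply: resI_unit.
split=> [u v|]; last exact: C_unit.
apply: le_bigmin => [|y _].
  by case/andP: (tnorm_unit HTn (Rt_unit u v) (C_unit v)).
apply: resI_ub => //; first exact: tnorm_unit.
apply: le_trans (tnorm_Rt_trans _ _ _ _) _ => //.
apply: le_trans (tnorm_resI_le HT (Rt_unit y v) (m_ge0 y)).
exact/ler_tnormr/lower_closure_le_resI/resI_unit.
Qed.

Lemma lower_closure_le z : lower_closure m z <= m z.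
Proof. by rewrite -[leRHS](resI1x HT (Hm z)) -(Rt_refl z) lower_closure_le_resI. Qed.

Lemma le_lower_closure z : (forall y, B y <= m y) -> B z <= lower_closure m z.
Proof.
move=> Bm; apply: le_bigmin => [|y _]; first by case/andP: (B_unit z).
by apply: resI_ub => //; exact: le_trans (B_ext y z) (Bm y).
Qed.

End Closures.

Section OptimalSolution.
Variables (R : realType) (U : finType) (T : R -> R -> R) (Rt : U -> U -> R)
  (A : U -> R) (L : R -> R -> R) (Ahat : U -> R).
Hypotheses (HT : left_continuous_tnorm T) (HR : T_preorder T Rt)
  (HA : fuzzy_set A) (HL : vee_loss L) (Hopt : optimal_solution T Rt A L Ahat).
Let HTn : is_tnorm T := HT.1.

Let Rt_unit u v : unit_iv (Rt u v). Proof. by case: HR => h _ _; apply: h. Qed.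
Let Rt_refl u : Rt u u = 1. Proof. by case: HR. Qed.
Let Ahat_feasible : feasible T Rt Ahat. Proof. by case: Hopt. Qed.
Let Ahat_unit u : unit_iv (Ahat u). Proof. by case: Ahat_feasible => _; apply. Qed.
Let Ahat_ext u v : T (Rt u v) (Ahat v) <= Ahat u.
Proof. by case: Ahat_feasible => + _; apply. Qed.

Let Amin y := Num.min (A y) (Ahat y).
Let Amax y := Num.max (A y) (Ahat y).

Let Amin_fuzzy : fuzzy_set Amin.
Proof. by move=> y; rewrite /Amin; case: leP. Qed.
Let Amax_fuzzy : fuzzy_set Amax.
Proof. by move=> y; rewrite /Amax; case: leP. Qed.

Lemma optimal_between_eq B : feasible T Rt B ->
  (forall z, Amin z <= B z <= Amax z) -> B =1 Ahat.
Proof.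
move=> HB between x; apply/eqP; apply: contraT => Bx.
have closer z : Ahat z != B z -> L (A z) (B z) < L (A z) (Ahat z).
  by move=> neq; apply: vee_loss_lt_between; rewrite 1?eq_sym ?between.
suff : \sum_z L (A z) (B z) < \sum_z L (A z) (Ahat z) by rewrite ltNge Hopt.2.
rewrite (bigD1 x) // [ltRHS](bigD1 x) //=.
rewrite ltr_leD ?closer 1?eq_sym //; apply: ler_sum => z _.
by have [-> | /closer/ltW] := eqVneq (Ahat z) (B z).
Qed.

Lemma optimal_upper_closure : Ahat =1 upper_closure T Rt Amin.
Proof.
move=> z; apply/esym/optimal_between_eq => [|{}z]; first exact: upper_closure_feasible.
rewrite le_upper_closure //= le_max; apply/orP; right.
apply: (upper_closure_le HT HR Amin_fuzzy Ahat_feasible) => y.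
by rewrite ge_min lexx orbT.
Qed.

Lemma optimal_lower_closure : Ahat =1 lower_closure T Rt Amax.
Proof.
move=> z; apply/esym/optimal_between_eq => [|{}z]; first exact: lower_closure_feasible.
rewrite lower_closure_le // andbT ge_min; apply/orP; right.
apply: (le_lower_closure HT HR Amax_fuzzy Ahat_feasible) => y.
by rewrite le_max lexx orbT.
Qed.

Lemma optimal_generated_below u :
  exists v, Ahat v <= A v /\ Ahat u = T (Rt u v) (Ahat v).
Proof.
pose P y := Ahat u <= T (Rt u y) (Ahat y).
have Pu : P u by rewrite /P Rt_refl tnorm1x.
case: (arg_maxP A Pu); rewrite /P => w Pw w_max.
have [Aw | Aw] := leP (Ahat w) (A w).
  by exists w; split => //; apply/le_anti; rewrite Pw Ahat_ext.
have [y Ahat_wy] : exists y, Ahat w = T (Rt w y) (Amin y).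
  by rewrite optimal_upper_closure; apply: upper_closure_attained.
have Amin_le_Ahat : Amin y <= Ahat y by rewrite ge_min lexx orbT.
have Py : P y.
  apply: le_trans Pw _; rewrite Ahat_wy.
  apply: le_trans (tnorm_Rt_trans HT HR _ _ _ (Amin_fuzzy y)) _.
  exact: ler_tnormr.
have Ay_le_Aw : A y <= A w := w_max y Py.
suff : A w < A y by rewrite ltNge Ay_le_Aw.
apply: lt_le_trans Aw _; rewrite Ahat_wy; apply: le_trans (tnorm_ler HTn _ _) _ => //.
by rewrite ge_min lexx.
Qed.

Lemma optimal_generated_above u :
  exists v, A v <= Ahat v /\ Ahat u = resI T (Rt v u) (Ahat v).
Proof.
pose P y := resI T (Rt y u) (Ahat y) <= Ahat u.
have Ahat_ge0 y : 0 <= Ahat y by case/andP: (Ahat_unit y).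
have Pu : P u by rewrite /P Rt_refl resI1x.
case: (arg_minP A Pu); rewrite /P => w Pw w_min.
have [Aw | Aw] := leP (A w) (Ahat w).
  by exists w; split => //; apply/le_anti; rewrite Pw resI_ub.
have [y Ahat_wy] : exists y, Ahat w = resI T (Rt y w) (Amax y).
  by rewrite optimal_lower_closure; apply: lower_closure_attained.
have Ahat_le_Amax : Ahat y <= Amax y by rewrite le_max lexx orbT.
have Py : P y.
  apply: le_trans Pw; apply: resI_ub => //; first exact: resI_unit.
  rewrite Ahat_wy; apply: resI_ub => //;
    [exact/tnorm_unit/resI_unit | by case/andP: (Amax_fuzzy y) |].
  apply: le_trans (tnorm_Rt_trans HT HR _ _ _ _) _; first exact: resI_unit.
  exact: le_trans (tnorm_resI_le HT _ _) Ahat_le_Amax.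
have Aw_le_Ay : A w <= A y := w_min y Py.
suff : A y < A w by rewrite ltNge Aw_le_Ay.
apply: le_lt_trans Aw; rewrite Ahat_wy.
apply: le_trans (resI_ge HT _ (Amax_fuzzy y)) => //.
by rewrite le_max lexx.
Qed.

End OptimalSolution.

Unset Implicit Arguments.

Theorem corollary2 (R : realType) (U : finType) (HU : (0 < #|U|)%N)
  (T : R -> R -> R) (HT : IMTL_triplet T)
  (Rt : U -> U -> R) (HR : T_preorder T Rt)
  (A : U -> R) (HA : fuzzy_set A)
  (L : R -> R -> R) (HL : vee_loss L)
  (Ahat : U -> R) (Hopt : optimal_solution T Rt A L Ahat) :
  (forall u, A u < Ahat u ->
     exists v, (Ahat v < A v \/ Ahat v = A v) /\
       adj_plus_to_minus T Rt v (Ahat v) u (resN T (Ahat u))) /\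
  (forall u, Ahat u < A u ->
     exists v, (A v < Ahat v \/ Ahat v = A v) /\
       adj_minus_to_plus T Rt v (resN T (Ahat v)) u (Ahat u)).
Proof.
case: HT => HTl N_invol; have HTn := HTl.1.
have Rt_unit u v : unit_iv (Rt u v) by case: HR => + _ _; apply.
have Ahat_unit u : unit_iv (Ahat u) by case: Hopt => -[_ +] _; apply.
have N_Ahat_unit v : unit_iv (resN T (Ahat v)) by apply: resI_unit.
split=> u _.
  have [v [Av ->]] := optimal_generated_below HTl HR HA HL Hopt u.
  exists v; split; first by move: Av; rewrite le_eqVlt => /predU1P[]; [right | left].
  by rewrite /adj_plus_to_minus resI_resN // (tnormC HTn).
have [v [Av ->]] := optimal_generated_above HTl HR HA HL Hopt u.
exists v; split; first by move: Av; rewrite le_eqVlt => /predU1P[->|]; [right | left].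
rewrite /adj_minus_to_plus resI_resN // -{1}(N_invol _ (Ahat_unit v)).
by rewrite resI_resN // (tnormC HTn).
Qed.
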